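(* If a BKL-word $w$ arises from a Rampichini diagram by reading the labels along some vertical line, then there exists another Rampichini diagram in which reading the labels along the right edge of the square (respectively, along the left edge) gives $w$.
   Context: A Rampichini diagram is a link diagram in a square with opposite sides identified (a diagram of a link in the thickened torus) whose arcs are labeled by transpositions in $S_n$, satisfying: (1) the diagram has no horizontal or vertical tangencies, so every horizontal line meets it in the same number of points, which is $n-1$; (2) if $\tau_1,\dots,\tau_{n-1}$ are the labels of the arcs met along the bottom edge from left to right, then $\tau_1\tau_2\cdots\tau_{n-1}=(1\,2\,\cdots\,n)$; (3) the labels on the top edge equal those on the bottom edge; (4) if an arc meeting the right edge has label $(i\ j)$, the corresponding arc on the left edge has label $(i-1\ j-1)$, indices mod $n$; (5) at every crossing, if the overcrossing strand has label $\sigma$ and the undercrossing strand has label $\rho$ on one side, then on the other side the undercrossing strand has label $\sigma\rho\sigma$ (the overcrossing label is unchanged). BKL (band) generators of the braid group $\mathbb{B}_n$: $a_{i,j}$ for $1\le i<j\le n$, $a_{i,j}=(\sigma_{j-1}\cdots\sigma_{i+1})\sigma_i(\sigma_{j-1}\cdots\sigma_{i+1})^{-1}$. The word read along a vertical line (avoiding crossings) is obtained by listing the intersection points from bottom to top and writing $a_{i,j}$ for an intersection with an arc labeled $(i\ j)$ that crosses the line from left to right (going upward), and $a_{i,j}^{-1}$ if it crosses from right to left. *)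

(* Combinatorial ("vertical sweep") model of Rampichini diagrams. *)
From mathcomp Require Import all_boot all_order all_algebra all_fingroup.
Set Implicit Arguments. Unset Strict Implicit. Unset Printing Implicit Defensive.
Import Order.TTheory GRing.Theory Num.Theory.

(* Indices 1..n of the paper are 'I_n = {0..n-1} here (shift by one). *)

(* The n-cycle (1 2 ... n), i.e. k |-> k+1 mod n. *)
Definition cyc (n : nat) : {perm 'I_n} := perm (@ordS_inj n).

(* An intersection point of a vertical line with the diagram:
   ((i, j), d) with i < j, carrying the label (i j), and d = true iff the arc
   crosses the line from left to right going upward (positive slope).
   The BKL letter read at this point is a_{i,j} if d, a_{i,j}^{-1} otherwise. *)
Definition pt (n : nat) := ('I_n * 'I_n * bool)%type.
Definition wf_pt n (p : pt n) : bool := (p.1.1 < p.1.2)%N.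
Definition label n (p : pt n) : {perm 'I_n} := tperm p.1.1 p.1.2.
Definition dir n (p : pt n) : bool := p.2.

(* BKL letters: (i, j, b) with i < j stands for a_{i,j}^{+1} if b, a_{i,j}^{-1} otherwise. *)
Definition bkl_letter (n : nat) := ('I_n * 'I_n * bool)%type.
Definition bkl_word (n : nat) (w : seq (bkl_letter n)) : bool :=
  all (fun l : bkl_letter n => (l.1.1 < l.1.2)%N) w.

Definition read_line n (s : seq (pt n)) : seq (bkl_letter n) := s.

(* A snapshot = a vertical line avoiding crossings: its points (bottom to top)
   and their heights in the open interval (0,1) (the square is [0,1]^2). *)
Definition snapshot (n : nat) := (seq (pt n) * seq rat)%type.

Definition valid_snapshot n (a : snapshot n) : Prop :=
  [/\ size a.1 = size a.2, all (@wf_pt n) a.1,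
      sorted (fun x y : rat => (x < y)%R) a.2 &
      all (fun x : rat => (0 < x < 1)%R) a.2].

Fixpoint moves (ds : seq bool) (ys zs : seq rat) : Prop :=
  match ds, ys, zs with
  | [::], [::], [::] => True
  | d :: ds', y :: ys', z :: zs' =>
      (if d then (y < z)%R else (z < y)%R) /\ moves ds' ys' zs'
  | _, _, _ => False
  end.

(* Events met by a vertical line sweeping from left to right. *)
Inductive event : Type :=
  | ECross of nat & bool
      (* crossing of the points at positions k, k+1 (from the bottom);
         the bool is true iff the strand coming from below is the over-strand *)
  | EWrapUp    (* the top point (positive) crosses the top/bottom edge *)
  | EWrapDown. (* the bottom point (negative) crosses the bottom/top edge *)

Definition is_wrap (e : event) : bool :=
  match e with ECross _ _ => false | _ => true end.

Definition step n (a : snapshot n) (e : event) (b : snapshot n) : Prop :=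
  match e with
  | ECross k lo =>
      exists (s1 s2 : seq (pt n)) (p q p' q' : pt n)
             (y1 y2 z1 z2 : seq rat) (u1 u2 v1 v2 : rat),
      [/\ [/\ size s1 = k, size y1 = k & size z1 = k],
          a = (s1 ++ p :: q :: s2, y1 ++ u1 :: u2 :: y2),
          b = (s1 ++ q' :: p' :: s2, z1 ++ v1 :: v2 :: z2),
          (if lo then
             [/\ p' = p, label q' = (label p * label q * label p)%g & dir q' = dir q]
           else
             [/\ q' = q, label p' = (label q * label p * label q)%g & dir p' = dir p]) &
          [/\ moves (map (@dir n) s1) y1 z1, moves [:: dir p] [:: u1] [:: v2],
              moves [:: dir q] [:: u2] [:: v1] & moves (map (@dir n) s2) y2 z2]]
  | EWrapUp =>
      exists (s : seq (pt n)) (p : pt n) (y z : seq rat) (u v : rat),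
      [/\ a = (rcons s p, rcons y u), b = (p :: s, v :: z), dir p = true &
          moves (map (@dir n) s) y z]
  | EWrapDown =>
      exists (s : seq (pt n)) (p : pt n) (y z : seq rat) (u v : rat),
      [/\ a = (p :: s, u :: y), b = (rcons s p, rcons z v), dir p = false &
          moves (map (@dir n) s) y z]
  end.

(* Label of the arc crossing the bottom edge at a wrap event (1 otherwise). *)
Definition bot_label n (s : seq (pt n)) (e : event) : {perm 'I_n} :=
  match e with
  | EWrapUp => if rev s is p :: _ then label p else 1%g
  | EWrapDown => if s is p :: _ then label p else 1%g
  | ECross _ _ => 1%g
  end.

(* A diagram: snapshots s_0 (left edge), ..., s_K (right edge) and the
   events e_0, ..., e_{K-1} (e_i happens between s_i and s_{i+1}). *)
Record rdiag (n : nat) := RDiag { snaps : seq (snapshot n); evs : seq event }.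

Definition snap0 (n : nat) : snapshot n := ([::], [::]).
Definition left_edge n (D : rdiag n) : snapshot n := nth (snap0 n) (snaps D) 0.
Definition right_edge n (D : rdiag n) : snapshot n :=
  nth (snap0 n) (snaps D) (size (evs D)).

Definition is_rampichini n (D : rdiag n) : Prop :=
  [/\ [/\ size (snaps D) = (size (evs D)).+1,
      (forall i, (i < size (snaps D))%N -> valid_snapshot (nth (snap0 n) (snaps D) i))
    & (forall i, (i < size (evs D))%N ->
         step (nth (snap0 n) (snaps D) i) (nth EWrapUp (evs D) i)
              (nth (snap0 n) (snaps D) i.+1))],
      (* (1): the bottom edge meets the diagram in n-1 points *)
      count is_wrap (evs D) = n.-1,
      (\prod_(i < size (evs D))
          bot_label (nth (snap0 n) (snaps D) i).1 (nth EWrapUp (evs D) i))%g = cyc n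
    & (* (4): left and right edges are the same line, labels shifted by -1 *)
      (left_edge D).2 = (right_edge D).2 /\
      all2 (fun p q : pt n => (label p == (label q ^ (cyc n)^-1)%g) && (dir p == dir q))
           (left_edge D).1 (right_edge D).1].

Definition line_words n (D : rdiag n) : seq (seq (bkl_letter n)) :=
  [seq read_line s.1 | s <- snaps D].

From mathcomp Require Import all_boot all_order all_algebra all_fingroup.
Set Implicit Arguments. Unset Strict Implicit. Unset Printing Implicit Defensive.

(* A Rampichini diagram lives on a torus, so it may be cut open along any
   vertical line avoiding crossings.  Moving the strip left of that line to the
   right of the square relabels it by the n-cycle c; the product of the bottom
   labels then changes by a cyclic rotation followed by a conjugation, which
   keeps it equal to c.  Iterating, any vertical line becomes the left edge.
   Conjugating every label of such a diagram by c^-1, which commutes with c,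
   turns its right edge into the former left edge. *)

Section Relabel.
Variable n : nat.
Local Notation c := (cyc n).

(* Conjugating the label (i j) by g gives (g i  g j), stored with i < j. *)
Definition relabel_pt (g : {perm 'I_n}) (p : pt n) : pt n :=
  let a := g p.1.1 in let b := g p.1.2 in
  (if (a < b)%N then (a, b) else (b, a), p.2).

Definition relabel (g : {perm 'I_n}) (s : snapshot n) : snapshot n :=
  (map (relabel_pt g) s.1, s.2).

Definition relabel_diag (g : {perm 'I_n}) (D : rdiag n) : rdiag n :=
  RDiag (map (relabel g) (snaps D)) (evs D).

Lemma label_relabel_pt g p : label (relabel_pt g p) = (label p ^ g)%g.
Proof. by rewrite /label /relabel_pt tpermJ; case: ifP => //= _; rewrite tpermC. Qed.

Lemma wf_relabel_pt g p : wf_pt p -> wf_pt (relabel_pt g p).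
Proof.
rewrite /wf_pt /relabel_pt /= => lt_ij.
case: (ltngtP (g p.1.1) (g p.1.2)) => //= /ord_inj/perm_inj eq_ij.
by move: lt_ij; rewrite eq_ij ltnn.
Qed.

Lemma wf_pt_inj (p q : pt n) : wf_pt p -> wf_pt q ->
  label p = label q -> dir p = dir q -> p = q.
Proof.
case: p => [[a b] d]; case: q => [[a' b'] d']; rewrite /wf_pt /label /dir /=.
move=> ab ab' E ->.
have : tperm a' b' a = b by rewrite -E tpermL.
move: ab; case: tpermP => [-> _ -> | -> ab a'b | _ _ + ba] //.
  by have := ltn_trans ab' ab; rewrite a'b ltnn.
by rewrite ba ltnn.
Qed.

Lemma relabel_ptK g p : wf_pt p -> relabel_pt g^-1 (relabel_pt g p) = p.
Proof.
move=> wp; apply: wf_pt_inj => //; first by do 2!apply: wf_relabel_pt.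
by rewrite !label_relabel_pt conjgK.
Qed.

Lemma relabelK g a : all (@wf_pt n) a.1 -> relabel g^-1 (relabel g a) = a.
Proof.
case: a => s ys /= ws; rewrite /relabel /= -map_comp map_id_in //.
by move=> p /(allP ws); apply: relabel_ptK.
Qed.

Lemma valid_relabel g a : valid_snapshot a -> valid_snapshot (relabel g a).
Proof.
case=> h1 h2 h3 h4; split => //=; first by rewrite size_map.
by apply/allP => _ /mapP [p /(allP h2) wp ->]; apply: wf_relabel_pt.
Qed.

Lemma step_relabel g a e b : step a e b -> step (relabel g a) e (relabel g b).
Proof.
case: e => [k lo | |] /=.
- case=> s1 [s2 [p [q [p' [q' [y1 [y2 [z1 [z2 [u1 [u2 [v1 [v2
         [[h1 h2 h3] -> -> hl [m1 m2 m3 m4]]]]]]]]]]]]]]].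
  exists (map (relabel_pt g) s1), (map (relabel_pt g) s2), (relabel_pt g p),
    (relabel_pt g q), (relabel_pt g p'), (relabel_pt g q'),
    y1, y2, z1, z2, u1, u2, v1, v2.
  split; rewrite /relabel /= ?map_cat ?size_map //.
  + by case: lo hl => -[-> e1 e2]; split => //; rewrite !label_relabel_pt e1 !conjMg.
  + by rewrite -!map_comp; split.
- case=> s [p [y [z [u [v [-> -> dp m]]]]]].
  exists (map (relabel_pt g) s), (relabel_pt g p), y, z, u, v.
  by split; rewrite /relabel /= ?map_rcons -?map_comp.
- case=> s [p [y [z [u [v [-> -> dp m]]]]]].
  exists (map (relabel_pt g) s), (relabel_pt g p), y, z, u, v.
  by split; rewrite /relabel /= ?map_rcons -?map_comp.
Qed.

Lemma bot_label_relabel g s e :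
  bot_label (map (relabel_pt g) s) e = (bot_label s e ^ g)%g.
Proof.
case: e => [k lo | |] /=; first by rewrite conj1g.
- by rewrite -map_rev; case: (rev s) => [|p r] /=; rewrite ?conj1g ?label_relabel_pt.
- by case: s => [|p r] /=; rewrite ?conj1g ?label_relabel_pt.
Qed.

Definition edge_match (p q : pt n) : bool :=
  (label p == (label q ^ c^-1)%g) && (dir p == dir q).

Lemma edge_match_relabel (s : seq (pt n)) : all2 edge_match s (map (relabel_pt c) s).
Proof. by elim: s => //= p s ->; rewrite /edge_match label_relabel_pt conjgK !eqxx. Qed.

Lemma edge_match_eq (s t : seq (pt n)) : all (@wf_pt n) s -> all (@wf_pt n) t ->
  all2 edge_match s t -> t = map (relabel_pt c) s.
Proof.
elim: s t => [|p s IH] [|q t] //= /andP [wp ws] /andP [wq wt].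
case/andP=> /andP [/eqP lpq /eqP dpq] match_st.
rewrite -(IH t) //; congr cons; apply: wf_pt_inj => //; first exact: wf_relabel_pt.
by rewrite label_relabel_pt lpq conjgKV.
Qed.

Lemma all2_edge_match_relabel g (s t : seq (pt n)) : commute g c ->
  all2 edge_match s t ->
  all2 edge_match (map (relabel_pt g) s) (map (relabel_pt g) t).
Proof.
move=> cgc; elim: s t => [|p s IH] [|q t] //= /andP [/andP [/eqP lpq dpq] match_st].
rewrite IH // /edge_match dpq !label_relabel_pt lpq -!conjgM.
by rewrite (commuteV cgc) eqxx.
Qed.

Lemma right_edge_relabel D : is_rampichini D -> right_edge D = relabel c (left_edge D).
Proof.
case=> [[hs hv _] _ _ [eq_ys match_edges]].
have [_ wl _ _] : valid_snapshot (left_edge D) by apply: hv; rewrite hs.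
have [_ wr _ _] : valid_snapshot (right_edge D) by apply: hv; rewrite hs.
move: eq_ys match_edges wl wr.
case: (left_edge D) => sl yl; case: (right_edge D) => sr yr /= <- match_edges wl wr.
by rewrite /relabel (edge_match_eq wl wr match_edges).
Qed.

Lemma edges_relabel_diag g D : size (snaps D) = (size (evs D)).+1 ->
  left_edge (relabel_diag g D) = relabel g (left_edge D) /\
  right_edge (relabel_diag g D) = relabel g (right_edge D).
Proof. by move=> hs; rewrite /left_edge /right_edge /= !(nth_map (snap0 n)) ?hs. Qed.

Lemma is_rampichini_relabel g D : commute g c ->
  is_rampichini D -> is_rampichini (relabel_diag g D).
Proof.
move=> cgc [[hs hv hst] hc hp [eq_ys match_edges]].
have in_snaps i : (i <= size (evs D))%N -> (i < size (snaps D))%N by rewrite hs.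
split; first split => /=.
- by rewrite size_map.
- by move=> i; rewrite size_map => hi; rewrite (nth_map (snap0 n)) //; apply/valid_relabel/hv.
- move=> i hi; rewrite !(nth_map (snap0 n)) ?in_snaps ?(ltnW hi) //.
  exact/step_relabel/hst.
- exact: hc.
- have fix_c : (c ^ g = c)%g by apply/conjg_fixP/commgP/commute_sym.
  rewrite -[RHS]fix_c -hp conjg_prod; apply: eq_bigr => i _.
  by rewrite (nth_map (snap0 n)) ?in_snaps ?(ltnW (ltn_ord i)) // bot_label_relabel.
- have [-> ->] := edges_relabel_diag g hs.
  by split; last exact: all2_edge_match_relabel.
Qed.

End Relabel.

(* Moving the first bottom label to the end of the product, relabelled by c. *)
Lemma prod_rotate_conj (gT : finGroupType) (x y z : gT) :
  (x * y = z -> y * x ^ z = z)%g.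
Proof.
have conj_self : (x ^ x = x)%g by rewrite conjgE mulKg.
by move=> <-; rewrite conjgM conj_self -conjgC.
Qed.

Section Rotate.
Variable n : nat.
Local Notation c := (cyc n).

Lemma is_rampichini_rotate (s0 : snapshot n) ss e0 es :
  is_rampichini (RDiag (s0 :: ss) (e0 :: es)) ->
  is_rampichini (RDiag (rcons ss (relabel c (nth (snap0 n) ss 0))) (rcons es e0)).
Proof.
move=> hD; have edge := right_edge_relabel hD.
case: hD => [[/= [hs] hv hst] hc hp [_ _]].
rewrite /right_edge /left_edge /= in edge.
have step0 := hst 0 isT.
split; first split => /=.
- by rewrite !size_rcons hs.
- move=> i; rewrite size_rcons ltnS leq_eqVlt => /orP [/eqP -> | hi]; rewrite nth_rcons.
  + by rewrite ltnn eqxx; apply/valid_relabel/(hv 1); rewrite /= hs.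
  + by rewrite hi; apply: (hv i.+1).
- move=> i; rewrite size_rcons ltnS leq_eqVlt => /orP [/eqP -> | hi]; rewrite !nth_rcons hs.
  + by rewrite ltnSn !ltnn !eqxx edge; exact: step_relabel step0.
  + by rewrite !ltnS (ltnW hi) hi; apply: (hst i.+1).
- by rewrite -hc /= -cats1 count_cat /= addn0 addnC.
- rewrite size_rcons big_ord_recr /= !nth_rcons hs ltnSn ltnn eqxx edge.
  rewrite bot_label_relabel; apply: prod_rotate_conj.
  rewrite -[in RHS]hp big_ord_recl; congr (_ * _)%g; apply: eq_bigr => i _.
  by rewrite lift0 !nth_rcons hs ltnS ltn_ord (ltnW (ltn_ord i)).
- rewrite /left_edge /right_edge /= !nth_rcons size_rcons hs ltnn eqxx.
  by split; last exact: edge_match_relabel.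
Qed.

Lemma rotate_to_left_edge m (D : rdiag n) : is_rampichini D ->
  (m < size (snaps D))%N ->
  exists2 D' : rdiag n, is_rampichini D' & left_edge D' = nth (snap0 n) (snaps D) m.
Proof.
elim: m D => [|m IH] D hD hm; first by exists D.
have [[hs _ _] _ _ _] := hD.
case: D hD hs hm => [[|s0 ss] [|e0 es]] //= hD [hs]; rewrite hs // ltnS => hm.
have [|D' hD' left_D'] := IH _ (is_rampichini_rotate hD).
  by rewrite size_rcons hs ltnW.
by exists D'; rewrite // left_D' nth_rcons hs hm.
Qed.

End Rotate.

Theorem lemma4p2 (n : nat) (D : rdiag n) (w : seq (bkl_letter n)) :
  is_rampichini D -> w \in line_words D ->
  (exists D' : rdiag n, is_rampichini D' /\ read_line (right_edge D').1 = w) /\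
  (exists D' : rdiag n, is_rampichini D' /\ read_line (left_edge D').1 = w).
Proof.
move=> hD /mapP [s /(nthP (snap0 n)) [m hm <-] ->].
have [D' hD' left_D'] := rotate_to_left_edge hD hm.
split; last by exists D'; rewrite left_D'.
exists (relabel_diag (cyc n)^-1 D'); split.
  by apply: is_rampichini_relabel => //; apply/commute_sym/commuteV.
have [[hs hv _] _ _ _] := hD'.
have [_ -> ] := edges_relabel_diag (cyc n)^-1 hs.
have [_ wl _ _] : valid_snapshot (left_edge D') by apply: hv; rewrite hs.
by rewrite right_edge_relabel // relabelK // left_D'.
Qed.
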